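(* Let $\mathcal{G}$ be a finite connected undirected simple graph with $N$ nodes which is not a tree, with adjacency matrix $(a_{ij})$ and non-backtracking centralities $x_1,\dots,x_N$. Let $\mathcal{W}$ be the weighted network with weights $w_{ij}=a_{ij}x_ix_j$, strengths $s_i=\sum_k w_{ik}$, total strength $s=\sum_{i,j}w_{ij}$, and Laplacian $\mathbf{L}=\mathbf{S}-\mathbf{W}$ with $\mathbf{S}=\mathrm{diag}(s_1,\dots,s_N)$, $\mathbf{W}=(w_{ij})$. Let $0=\theta_1<\theta_2\le\dots\le\theta_N$ be the eigenvalues of $\mathbf{L}$ with orthonormal eigenvectors $\phi_1,\dots,\phi_N$, $\phi_k=(\phi_{k1},\dots,\phi_{kN})^\top$. Then for the NBCRW on $\mathcal{G}$: (i) the hitting time from node $i$ to node $j$ is $$T_{ij}=\sum_{z=1}^N s_z\sum_{k=2}^N\frac{1}{\theta_k}\left(\phi_{kj}^2-\phi_{ki}\phi_{kj}-\phi_{kj}\phi_{kz}+\phi_{ki}\phi_{kz}\right);$$ (ii) the partial mean hitting time to node $j$ is $$T_j=\frac{N}{N-1}\sum_{k=2}^N\frac{1}{\theta_k}\left(s\,\phi_{kj}^2-\phi_{kj}\sum_{z=1}^N s_z\phi_{kz}\right);$$ (iii) the global mean hitting time is $$\langle T\rangle=\frac{s}{N-1}\sum_{k=2}^N\frac{1}{\theta_k}.$$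
   Context: The non-backtracking matrix $\mathbf{B}$ of $\mathcal{G}$ is the $2E\times 2E$ matrix indexed by directed edges $i\to j$ (each undirected edge gives two directed edges), with $B_{i\to j,\,k\to l}=1$ if $j=k$ and $i\neq l$, and $0$ otherwise; $v=(v_{i\to j})$ is a non-negative eigenvector for its leading (Perron–Frobenius) eigenvalue. The non-backtracking centrality of node $i$ is $x_i=\sum_{j\in\mathcal{N}_i}v_{i\to j}$. The NBCRW is the Markov chain with $p_{ij}=a_{ij}x_j/\sum_k a_{ik}x_k$ (assumed defined). The hitting time $T_{ij}$ ($i\ne j$) is the expected number of steps for the walk started at $i$ to reach $j$ for the first time, with $T_{jj}=0$; the partial mean hitting time is $T_j=\frac{1}{N-1}\sum_{i=1}^N T_{ij}$; the global mean hitting time is $\langle T\rangle=\frac{1}{N(N-1)}\sum_{i}\sum_{j\ne i}T_{ij}$. *)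

From HB Require Import structures.
From mathcomp Require Import all_boot all_order all_algebra.
From mathcomp Require Import all_classical all_reals all_analysis.
From mathcomp Require Import complex.
Set Implicit Arguments. Unset Strict Implicit. Unset Printing Implicit Defensive.
Import Order.TTheory GRing.Theory Num.Theory.
Import numFieldNormedType.Exports.
Local Open Scope classical_set_scope.
Local Open Scope ring_scope.

Section Defs.
Variable R : realType.
Variable N : nat.
Variable adj : rel 'I_N.

Definition simple_graph := symmetric adj /\ irreflexive adj.
Definition connected_graph := forall i j : 'I_N, connect adj i j.
Definition has_cycle := exists c : seq 'I_N, [/\ (3 <= size c)%N, uniq c & cycle adj c].
Definition is_tree := connected_graph /\ ~ has_cycle.

Definition a (i j : 'I_N) : R := (adj i j)%:R.

Definition dedge := {p : 'I_N * 'I_N | adj p.1 p.2}.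

Definition NB (e f : dedge) : R :=
  (((val e).2 == (val f).1) && ((val e).1 != (val f).2))%:R.

Definition NB_eigenvalue (mu : R[i]) :=
  exists w : dedge -> R[i], (exists e, w e != 0) /\
    forall e, \sum_f ((NB e f)%:C)%C * w f = mu * w e.

(* v is a non-negative eigenvector of B for its leading (Perron-Frobenius)
   eigenvalue lambda, i.e. lambda is a (real) eigenvalue whose modulus dominates
   the modulus of every complex eigenvalue (lambda = spectral radius) *)
Definition NB_leading_eigvec (lambda : R) (v : dedge -> R) :=
  [/\ forall e, 0 <= v e, exists e, v e != 0,
      forall e, \sum_f NB e f * v f = lambda * v e
    & forall mu, NB_eigenvalue mu -> `|mu| <= (lambda%:C)%C].

Definition nbc (v : dedge -> R) (i : 'I_N) : R :=
  \sum_(e : dedge | (val e).1 == i) v e.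

Definition nbcrw (x : 'I_N -> R) (i j : 'I_N) : R :=
  a i j * x j / \sum_k a i k * x k.

(* first-passage probabilities: fpt P n i j = probability that the walk started
   at i reaches j for the first time at step n+1 *)
Fixpoint fpt (P : 'I_N -> 'I_N -> R) (n : nat) (i j : 'I_N) : R :=
  match n with
  | 0 => P i j
  | n'.+1 => \sum_(k | k != j) P i k * fpt P n' k j
  end.

Definition hit_series (P : 'I_N -> 'I_N -> R) (i j : 'I_N) (m : nat) : R :=
  \sum_(n < m) (n.+1)%:R * fpt P n i j.

Definition hitting_time (P : 'I_N -> 'I_N -> R) (i j : 'I_N) : R :=
  if i == j then 0 else lim (hit_series P i j @ \oo).

Definition partial_mean_ht (P : 'I_N -> 'I_N -> R) (j : 'I_N) : R :=
  (N.-1)%:R^-1 * \sum_i hitting_time P i j.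

Definition global_mean_ht (P : 'I_N -> 'I_N -> R) : R :=
  ((N * N.-1)%:R)^-1 * \sum_i \sum_(j | j != i) hitting_time P i j.

Definition wt (x : 'I_N -> R) (i j : 'I_N) : R := a i j * x i * x j.
Definition strength (x : 'I_N -> R) (i : 'I_N) : R := \sum_k wt x i k.
Definition total_strength (x : 'I_N -> R) : R := \sum_i \sum_j wt x i j.
Definition wlap (x : 'I_N -> R) : 'M[R]_N :=
  \matrix_(i, j) ((i == j)%:R * strength x i - wt x i j).

End Defs.

(* The weights satisfy w_il = s_i p_il, so the Laplacian of the weighted network
   is L = S (I - P) with S = diag(s), and s is stationary because L has zero column
   sums.  Let G = sum_(k >= 2) phi_k phi_k^T / theta_k; since phi_1 is the constant
   unit vector, L G = I - J/N.  For a fixed target j the vector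
   y_i = sum_z s_z (G_jj - G_ij - G_jz + G_iz) vanishes at j and has (L y)_i = s_i
   for i <> j, i.e. y = 1 + Q y where Q is P with row and column j deleted: y is the
   vector of mean hitting times of j.  To identify y with the limit of the series
   sum_n n Prob(first hit at step n), let g_n = Q^n 1 be the survival probabilities:
   the partial sums of the series are sum_(n<m) g_n - m g_m, while
   y = sum_(n<m) g_n + Q^m y.  The solution y' of y' = y + Q y' (a second moment)
   bounds both Q^m y and m g_m by O(1/m). *)

From HB Require Import structures.
From mathcomp Require Import all_boot all_order all_algebra.
From mathcomp Require Import all_classical all_reals all_analysis.
From mathcomp Require Import complex.
From mathcomp Require Import ring lra zify.
Import Order.TTheory GRing.Theory Num.Theory.
Import numFieldNormedType.Exports.
Local Open Scope classical_set_scope.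
Local Open Scope ring_scope.

Set Implicit Arguments.
Unset Strict Implicit.
Unset Printing Implicit Defensive.

Section Taboo.
Variables (R : realType) (N : nat) (P : 'I_N -> 'I_N -> R) (j : 'I_N).

Definition taboo (y : 'I_N -> R) (k : 'I_N) : R :=
  if k == j then 0 else \sum_(l | l != j) P k l * y l.

(* survival n k: probability that the walk from k has not hit j within n steps *)
Definition survival (n : nat) : 'I_N -> R := iter n taboo (fun k => (k != j)%:R).

Lemma iter_taboo_add n y z :
  iter n taboo (fun k => y k + z k) = (fun k => iter n taboo y k + iter n taboo z k).
Proof.
elim: n => //= n ->; apply: funext => k; rewrite /taboo.
case: ifP => _; first by rewrite addr0.
by rewrite -big_split; apply: eq_bigr => l _; rewrite mulrDr.
Qed.

Lemma iter_taboo_scale n c y :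
  iter n taboo (fun k => c * y k) = (fun k => c * iter n taboo y k).
Proof.
elim: n => //= n ->; apply: funext => k; rewrite /taboo.
case: ifP => _; first by rewrite mulr0.
by rewrite mulr_sumr; apply: eq_bigr => l _; rewrite mulrCA.
Qed.

Lemma iter_taboo_unfold b y : (forall k, y k = b k + taboo y k) ->
  forall m k, y k = \sum_(n < m) iter n taboo b k + iter m taboo y k.
Proof.
move=> yE; have {}yE : y = (fun k => b k + taboo y k) by apply: funext.
elim=> [|m IHm] k; first by rewrite big_ord0 add0r.
rewrite IHm big_ord_recr -addrA; congr (_ + _).
by rewrite {1}yE iter_taboo_add iterSr.
Qed.

Lemma fpt_survival : (forall k, \sum_l P k l = 1) ->
  forall n k, k != j -> fpt P n k j = survival n k - survival n.+1 k.
Proof.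
move=> P_sum1; elim=> [|n IHn] k kj.
  rewrite /survival /= /taboo (negbTE kj) /=.
  have := P_sum1 k; rewrite (bigD1 j) //= => sum1.
  rewrite (eq_bigr (P k)) => [|l ->]; last by rewrite mulr1.
  by rewrite -sum1 addrK.
rewrite [in RHS]/survival !iterS -!/(survival _) [in RHS]/taboo (negbTE kj) -sumrB /=.
by apply: eq_bigr => l lj; rewrite IHn // mulrBr.
Qed.

Lemma hit_series_survival i : (forall k, \sum_l P k l = 1) -> i != j ->
  forall m, hit_series P i j m = \sum_(n < m) survival n i - m%:R * survival m i.
Proof.
move=> P_sum1 ij; elim=> [|m IHm]; first by rewrite /hit_series !big_ord0 mul0r subr0.
rewrite /hit_series big_ord_recr /= -/(hit_series P i j m) IHm big_ord_recr /=.
by rewrite fpt_survival // (_ : survival m.+1 = taboo (survival m)) // -addn1 natrD; ring.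
Qed.

Hypothesis P_ge0 : forall k l, 0 <= P k l.
Hypothesis P_sum1 : forall k, \sum_l P k l = 1.

Lemma iter_taboo_le n y z : (forall k, y k <= z k) ->
  forall k, iter n taboo y k <= iter n taboo z k.
Proof.
elim: n y z => [|n IHn] y z yz k /=; first exact: yz.
rewrite /taboo; case: ifP => // _.
by apply: ler_sum => l _; apply: ler_wpM2l => //; apply: IHn.
Qed.

Lemma iter_taboo_ge0 n y : (forall k, 0 <= y k) -> forall k, 0 <= iter n taboo y k.
Proof.
move=> y_ge0 k; have le0 l : 0 * y l <= y l by rewrite mul0r.
by have := iter_taboo_le n le0 k; rewrite iter_taboo_scale /= mul0r.
Qed.

(* minimum principle: at a minimum point k0 of y, y k0 >= b k0 + t * y k0 with 0 <= t <= 1 *)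
Lemma taboo_fixpoint_ge0 b y : (forall k, k != j -> 0 < b k) -> 0 <= b j ->
  (forall k, y k = b k + taboo y k) -> forall k, 0 <= y k.
Proof.
move=> b_gt0 bj_ge0 yE.
have [k0 _ k0_min] := @arg_minP _ _ _ j predT y erefl.
suff y0_ge0 : 0 <= y k0 by move=> k; apply: le_trans y0_ge0 (k0_min k _).
rewrite leNgt; apply/negP => y0_lt0.
case: (eqVneq k0 j) => [k0E|k0j].
  by move: y0_lt0; rewrite yE /taboo k0E eqxx addr0 ltNge bj_ge0.
have := yE k0; rewrite /taboo (negbTE k0j).
set t := \sum_(l | l != j) P k0 l.
have t_le1 : t <= 1 by rewrite -(P_sum1 k0) (bigD1 j) //= lerDr.
have t_ge0 : 0 <= t by apply: sumr_ge0.
have : t * y k0 <= \sum_(l | l != j) P k0 l * y l.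
  by rewrite mulr_suml; apply: ler_sum => l _; apply: ler_wpM2l => //; apply: k0_min.
have := b_gt0 _ k0j; set u := \sum_(l | l != j) _; nra.
Qed.

Lemma taboo_indicator_le k : taboo (fun l => (l != j)%:R) k <= (k != j)%:R.
Proof.
rewrite /taboo; case: eqVneq => // _; rewrite /= mulr1n.
rewrite (eq_bigr (P k)) => [|l ->]; last by rewrite mulr1.
by rewrite -(P_sum1 k) [X in _ <= X](bigD1 j) //= lerDr.
Qed.

Lemma survival_ge0 n k : 0 <= survival n k.
Proof. by apply: iter_taboo_ge0 => l; rewrite ler0n. Qed.

Lemma survival_le m n k : (m <= n)%N -> survival n k <= survival m k.
Proof.
apply: (Order.NatMonotonyTheory.nonincnP (f := survival^~ k)) => {}n.
by rewrite /survival iterSr; apply: iter_taboo_le; apply: taboo_indicator_le.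
Qed.

Section MeanHittingTime.
Variables h h2 : 'I_N -> R.
Hypothesis h_eq : forall k, h k = (k != j)%:R + taboo h k.
Hypothesis h2_eq : forall k, h2 k = h k + taboo h2 k.

Lemma mean_hit_ge0 k : 0 <= h k.
Proof. by apply: (taboo_fixpoint_ge0 _ _ h_eq) => [l ->|]; rewrite ?ltr01 ?eqxx. Qed.

Lemma taboo_mean_hit_le k : taboo h k <= h k.
Proof. by rewrite [X in _ <= X]h_eq lerDr ler0n. Qed.

Lemma second_moment_ge0 k : 0 <= h2 k.
Proof.
apply: (taboo_fixpoint_ge0 _ _ h2_eq) => [l lj|]; last exact: mean_hit_ge0.
rewrite h_eq lj; apply: (lt_le_trans ltr01); rewrite lerDl.
exact: (iter_taboo_ge0 1 mean_hit_ge0).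
Qed.

Lemma mean_hit_unfold m k : h k = \sum_(n < m) survival n k + iter m taboo h k.
Proof. exact: iter_taboo_unfold h_eq m k. Qed.

Lemma sum_survival_le m k : \sum_(n < m) survival n k <= h k.
Proof.
rewrite [X in _ <= X](mean_hit_unfold m k) lerDl.
by apply: iter_taboo_ge0; apply: mean_hit_ge0.
Qed.

Lemma mul_survival_le m k : m%:R * survival m k <= h k.
Proof.
apply: le_trans (sum_survival_le m k).
have -> : m%:R * survival m k = \sum_(n < m) survival m k.
  by rewrite sumr_const card_ord mulr_natl.
apply: ler_sum => n _.
by apply: survival_le; apply: ltnW.
Qed.

Lemma mul_survival_le_iter_taboo n d k :
  d%:R * survival (n + d) k <= iter n taboo h k.
Proof.
rewrite /survival iterD -/(survival d).
have -> : d%:R * iter n taboo (survival d) k =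
          iter n taboo (fun l => d%:R * survival d l) k by rewrite iter_taboo_scale.
by apply: iter_taboo_le => l; apply: mul_survival_le.
Qed.

Lemma sum_iter_taboo_le m k : \sum_(n < m) iter n taboo h k <= h2 k.
Proof.
rewrite [X in _ <= X](iter_taboo_unfold h2_eq m k) lerDl.
by apply: iter_taboo_ge0; apply: second_moment_ge0.
Qed.

Lemma iter_taboo_le_second_moment m k : m.+1%:R * iter m taboo h k <= h2 k.
Proof.
apply: le_trans (sum_iter_taboo_le m.+1 k).
have -> : m.+1%:R * iter m taboo h k = \sum_(n < m.+1) iter m taboo h k.
  by rewrite sumr_const card_ord mulr_natl.
apply: ler_sum => n _.
apply: (Order.NatMonotonyTheory.nonincnP (f := fun n => iter n taboo h k)).
  by move=> {}n; rewrite iterSr; apply: iter_taboo_le; apply: taboo_mean_hit_le.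
exact: ltn_ord n.
Qed.

Lemma sum_subn_double m : ((\sum_(n < m) (m - n)).*2 = m * m.+1)%N.
Proof.
elim: m => [|m IHm]; first by rewrite big_ord0.
rewrite big_ord_recl subn0 (eq_bigr (fun n : 'I_m => m - n)%N) => [|n _].
  by rewrite doubleD IHm; lia.
by rewrite lift0 subSS.
Qed.

Lemma survival_le_second_moment m k : (m * m.+1)%:R * survival m k <= 2 * h2 k.
Proof.
have : \sum_(n < m) (m - n)%:R * survival m k <= h2 k.
  apply: le_trans (sum_iter_taboo_le m k); apply: ler_sum => n _.
  by have := mul_survival_le_iter_taboo n (m - n) k; rewrite subnKC // ltnW.
rewrite -mulr_suml -natr_sum -(sum_subn_double m) -muln2 natrM.
set t := survival m k; set u := (\sum_(n < m) _)%:R; nra.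
Qed.

Lemma hit_series_bounds i m : i != j ->
  h i - 3 * h2 i / m.+1%:R <= hit_series P i j m <= h i.
Proof.
move=> ij; rewrite hit_series_survival // (mean_hit_unfold m i).
have w_gt0 : 0 < m.+1%:R :> R by rewrite ltr0n.
have q_le : iter m taboo h i <= h2 i / m.+1%:R.
  by rewrite ler_pdivlMr // mulrC iter_taboo_le_second_moment.
have g_le : m%:R * survival m i <= 2 * (h2 i / m.+1%:R).
  by rewrite mulrA ler_pdivlMr // mulrAC -natrM survival_le_second_moment.
have q_ge0 := iter_taboo_ge0 m mean_hit_ge0 i.
have g_ge0 := mulr_ge0 (ler0n R m) (survival_ge0 m i).
rewrite -mulrA; set u := h2 i / _ in q_le g_le *.
by apply/andP; split; lra.
Qed.

Lemma hit_series_cvg i : i != j -> hit_series P i j @ \oo --> h i.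
Proof.
move=> ij; apply: (@squeeze_cvgr _ _ _ _ (fun m => h i - 3 * h2 i * harmonic m) (fun=> h i)).
- by apply: nearW => m; apply: hit_series_bounds.
- rewrite -[X in _ --> X]subr0 -(mulr0 (3 * h2 i)).
  by apply: cvgB; [exact: cvg_cst | apply: cvgMl_tmp; exact: cvg_harmonic].
- exact: cvg_cst.
Qed.

End MeanHittingTime.
End Taboo.

Lemma lap_taboo_fixpoint (R : realType) (N : nat) (P : 'I_N -> 'I_N -> R)
    (s b y : 'I_N -> R) (j : 'I_N) :
  (forall k, s k != 0) -> y j = 0 -> b j = 0 ->
  (forall k, k != j -> \sum_l s k * ((k == l)%:R - P k l) * y l = s k * b k) ->
  forall k, y k = b k + taboo P j y k.
Proof.
move=> s_neq0 yj bj lap_y k; rewrite /taboo; case: eqVneq => [->|kj].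
  by rewrite yj bj addr0.
have -> : \sum_(l | l != j) P k l * y l = \sum_l P k l * y l.
  by rewrite [RHS](bigD1 j) //= yj mulr0 add0r.
apply: (mulfI (s_neq0 k)); rewrite mulrDr -lap_y //.
rewrite (eq_bigr (fun l => s k * ((k == l)%:R * y l) - s k * (P k l * y l))) => [|l _].
  rewrite sumrB -!mulr_sumr (bigD1 k) //= eqxx mul1r big1 ?addr0 => [|l lk].
    by rewrite subrK.
  by rewrite eq_sym (negbTE lk) mul0r.
by rewrite mulrBr mulrBl -!mulrA.
Qed.

Section LaplacianSpectrum.
Variables (R : realType) (N : nat) (L phi : 'M[R]_N) (theta : 'I_N -> R).

Definition green (i l : 'I_N) : R :=
  \sum_(k < N | (0 < k)%N) (theta k)^-1 * (phi k i * phi k l).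

Definition green_hit (c : 'I_N -> R) (j i : 'I_N) : R :=
  \sum_z c z * (green j j - green i j - green j z + green i z).

Lemma green_hit_at_target c j : green_hit c j j = 0.
Proof. by rewrite /green_hit big1 // => z _; rewrite subrr sub0r addNr mulr0. Qed.

Lemma green_hitE c j i : green_hit c j i = \sum_z c z * \sum_(k < N | (0 < k)%N)
    (theta k)^-1 * (phi k j ^+ 2 - phi k i * phi k j - phi k j * phi k z + phi k i * phi k z).
Proof.
apply: eq_bigr => z _; congr (_ * _).
by rewrite /green -!sumrB -big_split /=; apply: eq_bigr => k _; ring.
Qed.

Lemma green_weighted_diagE c j :
  (\sum_z c z) * green j j - \sum_z c z * green j z =
  \sum_(k < N | (0 < k)%N) (theta k)^-1 *
    ((\sum_z c z) * phi k j ^+ 2 - phi k j * \sum_z c z * phi k z).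
Proof.
have -> : \sum_z c z * green j z = \sum_(k < N | (0 < k)%N)
    (theta k)^-1 * (phi k j * \sum_z c z * phi k z).
  rewrite /green; under eq_bigr do rewrite mulr_sumr.
  rewrite exchange_big; apply: eq_bigr => k _.
  by rewrite !mulr_sumr; apply: eq_bigr => z _; ring.
by rewrite /green mulr_sumr -sumrB; apply: eq_bigr => k _; ring.
Qed.

Variable k0 : 'I_N.
Hypothesis k0_val : val k0 = 0%N.
Hypothesis L_row0 : forall i, \sum_l L i l = 0.
Hypothesis L_col0 : forall l, \sum_i L i l = 0.
Hypothesis phi_orthonormal : phi *m phi^T = 1%:M.
Hypothesis phi_eigen : forall k, L *m (row k phi)^T = theta k *: (row k phi)^T.
Hypothesis theta_gt0 : forall k : 'I_N, (0 < k)%N -> 0 < theta k.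

Lemma ord_gt0E (k : 'I_N) : (0 < k)%N = (k != k0).
Proof. by rewrite lt0n -k0_val; congr (~~ _); apply/eqP/eqP => [/val_inj|->]. Qed.

Lemma phi_eigenE k i : \sum_l L i l * phi k l = theta k * phi k i.
Proof.
have /matrixP/(_ i ord0) := phi_eigen k; rewrite !mxE => <-.
by apply: eq_bigr => l _; rewrite !mxE.
Qed.

Lemma phi_row_norm k : \sum_i phi k i * phi k i = 1.
Proof.
have /matrixP/(_ k k) := phi_orthonormal; rewrite !mxE eqxx mulr1n => <-.
by apply: eq_bigr => i _; rewrite mxE.
Qed.

Lemma phi_col_orthonormal i l : \sum_k phi k i * phi k l = (i == l)%:R.
Proof.
have /matrixP/(_ i l) := mulmx1C phi_orthonormal; rewrite !mxE => <-.
by apply: eq_bigr => k _; rewrite mxE.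
Qed.

(* summing the eigen-equation over i kills its left-hand side *)
Lemma phi_row_sum0 (k : 'I_N) : (0 < k)%N -> \sum_i phi k i = 0.
Proof.
move=> k_gt0; apply: (mulfI (lt0r_neq0 (theta_gt0 k_gt0))); rewrite mulr0 mulr_sumr.
rewrite (eq_bigr _ (fun i _ => esym (phi_eigenE k i))) exchange_big /=.
by apply: big1 => l _; rewrite -mulr_suml L_col0 mul0r.
Qed.

Lemma phi0_mul_sum i : phi k0 i * \sum_l phi k0 l = 1.
Proof.
have : \sum_l \sum_k phi k i * phi k l = 1.
  rewrite (eq_bigr _ (fun l _ => phi_col_orthonormal i l)) (bigD1 i) //= eqxx.
  by rewrite big1 ?addr0 // => l li; rewrite eq_sym (negbTE li).
rewrite exchange_big (bigD1 k0) //= [X in _ + X]big1 ?addr0 => [|k k_neq0]; last first.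
  by rewrite -mulr_sumr phi_row_sum0 ?mulr0 ?ord_gt0E.
by rewrite -mulr_sumr.
Qed.

Lemma phi0_mul i l : phi k0 i * phi k0 l = N%:R^-1.
Proof.
set u := \sum_m phi k0 m.
have u2 : u ^+ 2 = N%:R.
  rewrite -[LHS]mul1r -[in LHS](phi_row_norm k0) mulr_suml.
  have -> : N%:R = \sum_(m < N) 1 :> R by rewrite sumr_const card_ord.
  by apply: eq_bigr => m _; rewrite expr2 mulrACA /u phi0_mul_sum mulr1.
have u_neq0 : u != 0.
  apply/eqP => u0; have := phi0_mul_sum i.
  by rewrite -/u u0 mulr0 => /eqP; rewrite eq_sym oner_eq0.
rewrite -u2; apply: (mulIf (expf_neq0 2 u_neq0)).
by rewrite mulVf ?expf_neq0 // expr2 mulrACA /u !phi0_mul_sum mulr1.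
Qed.

Lemma phi_pos_col_orthonormal i l :
  \sum_(k < N | (0 < k)%N) phi k i * phi k l = (i == l)%:R - N%:R^-1.
Proof.
rewrite -phi_col_orthonormal [in RHS](bigD1 k0) //= phi0_mul addrAC subrr add0r.
by apply: eq_bigl => k; rewrite ord_gt0E.
Qed.

Lemma lap_green_mul i m : \sum_l L i l * green l m = (i == m)%:R - N%:R^-1.
Proof.
rewrite -phi_pos_col_orthonormal.
rewrite (eq_bigr (fun l => \sum_(k < N | (0 < k)%N)
    (theta k)^-1 * phi k m * (L i l * phi k l))) => [|l _]; last first.
  by rewrite mulr_sumr; apply: eq_bigr => k _; ring.
rewrite exchange_big /=; apply: eq_bigr => k k_gt0.
by rewrite -mulr_sumr phi_eigenE; field; rewrite gt_eqF ?theta_gt0.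
Qed.

Lemma green_sum0 l : \sum_i green i l = 0.
Proof.
rewrite /green exchange_big big1 //= => k k_gt0.
rewrite (eq_bigr (fun i => (theta k)^-1 * phi k l * phi k i)) => [|i _]; last by ring.
by rewrite -mulr_sumr phi_row_sum0 // mulr0.
Qed.

Lemma green_trace : \sum_i green i i = \sum_(k < N | (0 < k)%N) (theta k)^-1.
Proof.
by rewrite /green exchange_big; apply: eq_bigr => k _; rewrite -mulr_sumr phi_row_norm mulr1.
Qed.

Lemma lap_row_neq0 i : (1 < N)%N -> ~ (forall l, L i l = 0).
Proof.
move=> N_gt1 L_i0; have := phi_pos_col_orthonormal i i.
rewrite big1 => [|k k_gt0]; last first.
  have := phi_eigenE k i; rewrite big1 => [|l _]; last by rewrite L_i0 mul0r.
  by move/esym/eqP; rewrite mulf_eq0 (gt_eqF (theta_gt0 k_gt0)) => /eqP->; rewrite mul0r.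
move/eqP; rewrite eqxx eq_sym subr_eq0 eq_sym invr_eq1 pnatr_eq1.
by move/eqP=> N1; rewrite N1 in N_gt1.
Qed.

Lemma lap_green_hit c j i :
  \sum_l L i l * green_hit c j l = c i - (i == j)%:R * \sum_z c z.
Proof.
under eq_bigr do rewrite mulr_sumr.
rewrite exchange_big /=.
rewrite (eq_bigr (fun z => c z * (i == z)%:R - (i == j)%:R * c z)) => [|z _].
  rewrite sumrB -mulr_sumr (bigD1 i) //= eqxx mulr1 big1 ?addr0 // => z zi.
  by rewrite eq_sym (negbTE zi) mulr0.
rewrite (eq_bigr (fun l => c z * (green j j - green j z) * L i l +
    c z * (L i l * green l z - L i l * green l j))) => [|l _]; last by ring.
rewrite big_split /= -!mulr_sumr L_row0 mulr0 add0r sumrB !lap_green_mul; ring.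
Qed.

Lemma sum_green_hit c j : \sum_i green_hit c j i =
  N%:R * ((\sum_z c z) * green j j - \sum_z c z * green j z).
Proof.
rewrite /green_hit exchange_big mulr_suml -sumrB mulr_sumr; apply: eq_bigr => z _.
rewrite -mulr_sumr big_split /= !sumrB !green_sum0 !sumr_const card_ord.
by ring.
Qed.

Lemma sum_sum_green_hit c : \sum_j \sum_i green_hit c j i =
  N%:R * (\sum_z c z) * \sum_(k < N | (0 < k)%N) (theta k)^-1.
Proof.
rewrite (eq_bigr _ (fun j _ => sum_green_hit c j)) -mulr_sumr sumrB.
rewrite -[X in X - _]mulr_sumr green_trace exchange_big /=.
rewrite [X in _ - X]big1 ?subr0 ?mulrA // => z _.
by rewrite -mulr_sumr green_sum0 mulr0.
Qed.

Section ReversibleWalk.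
Variables (P : 'I_N -> 'I_N -> R) (s : 'I_N -> R).
Hypothesis N_gt1 : (1 < N)%N.
Hypothesis P_ge0 : forall k l, 0 <= P k l.
Hypothesis P_sum1 : forall k, \sum_l P k l = 1.
Hypothesis L_def : forall k l, L k l = s k * ((k == l)%:R - P k l).

Lemma s_neq0 i : s i != 0.
Proof.
by apply/eqP => si0; apply: (lap_row_neq0 (i := i) N_gt1) => l; rewrite L_def si0 mul0r.
Qed.

Lemma green_hit_taboo c b j : b j = 0 -> (forall k, k != j -> c k = s k * b k) ->
  forall k, green_hit c j k = b k + taboo P j (green_hit c j) k.
Proof.
move=> bj cE; apply: (lap_taboo_fixpoint s_neq0 _ bj) => [|k kj].
  exact: green_hit_at_target.
rewrite (eq_bigr (fun l => L k l * green_hit c j l)) => [|l _]; last by rewrite L_def.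
by rewrite lap_green_hit (negbTE kj) mul0r subr0 cE.
Qed.

Lemma hit_series_cvg_green_hit i j : i != j -> hit_series P i j @ \oo --> green_hit s j i.
Proof.
apply: (hit_series_cvg P_ge0 P_sum1 (h2 := green_hit (fun z => s z * green_hit s j z) j)).
- apply: (green_hit_taboo (b := fun k => (k != j)%:R)) => [|k kj]; first by rewrite eqxx.
  by rewrite kj mulr1.
- by apply: green_hit_taboo => //; apply: green_hit_at_target.
Qed.

Lemma hitting_time_green_hit i j : hitting_time P i j = green_hit s j i.
Proof.
rewrite /hitting_time; case: eqVneq => [->|ij]; first by rewrite green_hit_at_target.
by apply: cvg_lim => //; apply: hit_series_cvg_green_hit.
Qed.

Lemma partial_mean_ht_green j : partial_mean_ht P j =
  N%:R / (N.-1)%:R * ((\sum_z s z) * green j j - \sum_z s z * green j z).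
Proof.
rewrite /partial_mean_ht (eq_bigr _ (fun i _ => hitting_time_green_hit i j)).
by rewrite sum_green_hit mulrA [_^-1 * _]mulrC.
Qed.

Lemma global_mean_ht_green : global_mean_ht P =
  (\sum_z s z) / (N.-1)%:R * \sum_(k < N | (0 < k)%N) (theta k)^-1.
Proof.
have diag0 i : \sum_(j | j != i) hitting_time P i j = \sum_j hitting_time P i j.
  by rewrite [RHS](bigD1 i) //= hitting_time_green_hit green_hit_at_target add0r.
rewrite /global_mean_ht (eq_bigr _ (fun i _ => diag0 i)) exchange_big /=.
under eq_bigr do under eq_bigr do rewrite hitting_time_green_hit.
have N_neq0 : N%:R != 0 :> R by rewrite pnatr_eq0; lia.
have N1_neq0 : (N.-1)%:R != 0 :> R by rewrite pnatr_eq0; lia.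
by rewrite sum_sum_green_hit natrM invfM; field; rewrite N_neq0 N1_neq0.
Qed.

Theorem hitting_times_green :
  [/\ forall i j, i != j -> cvg (hit_series P i j @ \oo),
      forall i j, hitting_time P i j = green_hit s j i,
      forall j, partial_mean_ht P j =
        N%:R / (N.-1)%:R * ((\sum_z s z) * green j j - \sum_z s z * green j z)
    & global_mean_ht P =
        (\sum_z s z) / (N.-1)%:R * \sum_(k < N | (0 < k)%N) (theta k)^-1].
Proof.
split; [|exact: hitting_time_green_hit|exact: partial_mean_ht_green|exact: global_mean_ht_green].
by move=> i j ij; apply: cvgP (hit_series_cvg_green_hit ij).
Qed.

End ReversibleWalk.

End LaplacianSpectrum.

Lemma card_gt1_of_not_tree (N : nat) (adj : rel 'I_N) :
  connected_graph adj -> ~ is_tree adj -> (1 < N)%N.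
Proof.
move=> conn not_tree; rewrite ltnNge; apply/negP => N_le1.
apply: not_tree; split => // -[c [c_ge3 c_uniq _]].
have := max_card (mem c); rewrite card_ord (card_uniqP c_uniq) => /(leq_trans c_ge3).
by rewrite ltnNge (leq_trans N_le1).
Qed.

Lemma nbc_ge0 (R : realType) (N : nat) (adj : rel 'I_N) (lambda : R) (v : dedge adj -> R) :
  NB_leading_eigvec lambda v -> forall i, 0 <= nbc v i.
Proof. by case=> v_ge0 _ _ _ i; apply: sumr_ge0 => e _. Qed.

Section NBCRW.
Variables (R : realType) (N : nat) (adj : rel 'I_N) (x : 'I_N -> R).
Hypothesis adj_sym : symmetric adj.
Hypothesis x_ge0 : forall i, 0 <= x i.
Hypothesis deg_neq0 : forall i, \sum_k @a R N adj i k * x k != 0.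

Lemma nbcrw_ge0 i l : 0 <= nbcrw adj x i l.
Proof.
have a_ge0 k : 0 <= @a R N adj i k by rewrite ler0n.
by rewrite divr_ge0 ?mulr_ge0 ?sumr_ge0 // => k _; rewrite mulr_ge0.
Qed.

Lemma nbcrw_sum1 i : \sum_l nbcrw adj x i l = 1.
Proof. by rewrite -mulr_suml mulfV. Qed.

Lemma wlap_row0 i : \sum_l wlap adj x i l = 0.
Proof.
under eq_bigr do rewrite mxE.
rewrite sumrB (bigD1 i) //= eqxx mul1r big1 ?addr0 ?subrr // => l li.
by rewrite eq_sym (negbTE li) mul0r.
Qed.

Lemma wlap_col0 l : \sum_i wlap adj x i l = 0.
Proof.
under eq_bigr do rewrite mxE.
rewrite sumrB (bigD1 l) //= eqxx mul1r big1 ?addr0 => [|i il]; last first.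
  by rewrite (negbTE il) mul0r.
apply/eqP; rewrite subr_eq0; apply/eqP/eq_bigr => i _.
by rewrite /wt /a adj_sym mulrAC.
Qed.

Lemma wlapE i l :
  wlap adj x i l = strength adj x i * ((i == l)%:R - nbcrw adj x i l).
Proof.
rewrite mxE; have -> : strength adj x i = x i * \sum_k @a R N adj i k * x k.
  by rewrite mulr_sumr; apply: eq_bigr => k _; rewrite /wt mulrAC mulrC.
rewrite /nbcrw /wt; set d := (i == l)%:R.
by move: (deg_neq0 i); set D := \sum_k _; move=> D_neq0; field.
Qed.

End NBCRW.

(* phi k i = phi_{k i}: row k of phi is the k-th eigenvector (0-based index:
   k = 0 is theta_1, and "k = 2..N" is "0 < k") *)
Theorem theorem3 (R : realType) (N : nat) (adj : rel 'I_N)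
    (lambda : R) (v : dedge adj -> R) (theta : 'I_N -> R) (phi : 'M[R]_N) :
  simple_graph adj -> connected_graph adj -> ~ is_tree adj ->
  NB_leading_eigvec lambda v ->
  let x := nbc v in
  let P := nbcrw adj x in
  (forall i : 'I_N, \sum_k @a R N adj i k * x k != 0) ->
  phi *m phi^T = 1%:M ->
  (forall k : 'I_N, wlap adj x *m (row k phi)^T = theta k *: (row k phi)^T) ->
  (forall k l : 'I_N, (k <= l)%N -> theta k <= theta l) ->
  (forall k : 'I_N, val k = 0%N -> theta k = 0) ->
  (forall k : 'I_N, val k = 1%N -> 0 < theta k) ->
  let s := strength adj x in
  [/\ (forall i j : 'I_N, i != j -> cvg (hit_series P i j @ \oo)),
      (forall i j : 'I_N, hitting_time P i j =
         \sum_z s z * \sum_(k < N | (0 < k)%N) (theta k)^-1 *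
           (phi k j ^+ 2 - phi k i * phi k j - phi k j * phi k z + phi k i * phi k z)),
      (forall j : 'I_N, partial_mean_ht P j =
         N%:R / (N.-1)%:R * \sum_(k < N | (0 < k)%N) (theta k)^-1 *
           (total_strength adj x * phi k j ^+ 2 - phi k j * \sum_z s z * phi k z))
    & global_mean_ht P =
         total_strength adj x / (N.-1)%:R * \sum_(k < N | (0 < k)%N) (theta k)^-1].
Proof.
move=> [adj_sym _] adj_conn not_tree v_lead x P deg_neq0 phi_orth phi_eig theta_mono _ theta1 s.
have N_gt1 := card_gt1_of_not_tree adj_conn not_tree.
have theta_gt0 (k : 'I_N) : (0 < k)%N -> 0 < theta k.
  pose k1 : 'I_N := Ordinal N_gt1.
  by move=> k_gt0; apply: lt_le_trans (theta1 k1 erefl) (theta_mono k1 k k_gt0).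
have [cvg_hit hitE partialE globalE] := hitting_times_green
  (k0 := Ordinal (ltnW N_gt1)) erefl (wlap_row0 adj x) (wlap_col0 x adj_sym)
  phi_orth phi_eig theta_gt0 N_gt1 (nbcrw_ge0 adj (nbc_ge0 v_lead))
  (nbcrw_sum1 deg_neq0) (wlapE deg_neq0).
split => // [i j|j]; first by rewrite hitE green_hitE.
by rewrite partialE green_weighted_diagE.
Qed.
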